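(* Let $P$ be an NL poset on $X_n$ with twin classes $\alpha_1,\ldots,\alpha_r$ and twin poset $P_\equiv$. For $\varphi\in\mathrm{Aut}(P)$ and a twin class $\alpha$, set $\pi(\varphi)(\alpha)=\varphi(\alpha)=\{\varphi(x):x\in\alpha\}$. Then $\pi$ is a well-defined group homomorphism $\mathrm{Aut}(P)\to\mathrm{Aut}(P_\equiv)$, and its kernel (the automorphisms mapping each $\alpha_i$ onto itself) consists exactly of all bijections of $X_n$ that restrict to a permutation of each $\alpha_i$, so that $\ker(\pi)\cong\prod_{i=1}^r\mathfrak S_{|\alpha_i|}$. In particular, $\pi$ is surjective onto $\mathrm{Aut}(P_\equiv)$ if and only if every $\psi\in\mathrm{Aut}(P_\equiv)$ preserves twin-class sizes, i.e., $|\psi(\alpha)|=|\alpha|$ for all twin classes $\alpha$.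
   Context: Let $X_n=\{0,1,\ldots,n-1\}$. A naturally labeled (NL) poset on $X_n$ is a partial order $\preceq$ on $X_n$ such that $x\preceq y$ implies $x\le y$ in the usual integer order. $\mathrm{Aut}(P)$ is the group of bijections $\sigma$ of $X_n$ with $x\preceq y\iff\sigma(x)\preceq\sigma(y)$. For $x\in X_n$, $D(x)=\{z: z\prec x\}$, $U(x)=\{z: x\prec z\}$; $x,y$ are twins if $D(x)=D(y)$ and $U(x)=U(y)$, and the equivalence classes are the twin classes. The twin poset $P_\equiv$ is the set of twin classes ordered by $\alpha\preceq_\equiv\beta$ iff $x\preceq y$ for (any) $x\in\alpha$, $y\in\beta$. $\mathfrak S_k$ is the symmetric group on $k$ letters. *)

From mathcomp Require Import all_boot all_fingroup.
Set Implicit Arguments. Unset Strict Implicit. Unset Printing Implicit Defensive.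
Local Open Scope group_scope.

Section TwinDefs.
Variable n : nat.
Variable le : rel 'I_n.

Definition is_NL_poset : Prop :=
  [/\ reflexive le, antisymmetric le, transitive le &
      forall x y : 'I_n, le x y -> (x <= y)%N].

Definition AutP : {set {perm 'I_n}} :=
  [set s : {perm 'I_n} | [forall x, forall y, le x y == le (s x) (s y)]].

Definition Dset (x : 'I_n) : {set 'I_n} := [set z | (z != x) && le z x].
Definition Uset (x : 'I_n) : {set 'I_n} := [set z | (z != x) && le x z].
Definition twin (x y : 'I_n) : bool := (Dset x == Dset y) && (Uset x == Uset y).

Definition twin_classes : {set {set 'I_n}} :=
  [set [set y | twin x y] | x : 'I_n].

Definition TC : finType := {A : {set 'I_n} | A \in twin_classes}.

Definition twin_le (a b : TC) : bool :=
  [exists x in val a, exists y in val b, le x y].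

Definition AutTw : {set {perm TC}} :=
  [set p : {perm TC} | [forall a, forall b, twin_le a b == twin_le (p a) (p b)]].

End TwinDefs.

(* psi is pi(phi): psi(alpha) = phi(alpha) for every twin class alpha *)
Definition induces {n : nat} (le : rel 'I_n) (phi : {perm 'I_n})
  (psi : {perm (TC le)}) : Prop :=
  forall a : TC le, val (psi a) = phi @: val a.
Arguments induces {n} le phi psi.

(* Twins are incomparable (x < y would put x in D(y) = D(x)), and the order
   between two non-twins depends only on their twin classes.  So [le x y] is
   [x == y] for twins and the order of P_= between their classes otherwise;
   hence a permutation mapping twin classes onto twin classes is an
   automorphism of P exactly when the permutation it induces on the classes is
   an automorphism of P_=.  This gives well-definedness, the kernel, and the
   surjectivity criterion: a size-preserving automorphism of P_= lifts by
   matching every class bijectively with its image.  The kernel is the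
   stabiliser of every block of the partition into twin classes, i.e. the
   direct product of the symmetric groups of the blocks. *)

From mathcomp Require Import all_boot all_fingroup.
Set Implicit Arguments. Unset Strict Implicit. Unset Printing Implicit Defensive.
Local Open Scope group_scope.

Section Transfer.
Variables (T : finType) (A B : {set T}).
Hypothesis cardAB : #|A| = #|B|.

Definition transfer (x : T) : T := nth x (enum B) (index x (enum A)).

Lemma index_enum_lt x : x \in A -> index x (enum A) < size (enum B).
Proof. by rewrite -cardE -cardAB cardE index_mem mem_enum. Qed.

Lemma transfer_mem x : x \in A -> transfer x \in B.
Proof. by move=> xA; rewrite -mem_enum mem_nth ?index_enum_lt. Qed.

Lemma transfer_inj : {in A &, injective transfer}.
Proof.
move=> x y xA yA; rewrite /transfer (set_nth_default y x (index_enum_lt xA)) => /eqP.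
rewrite nth_uniq ?enum_uniq ?index_enum_lt // => /eqP.
by apply: (index_inj x); rewrite mem_enum.
Qed.

Lemma transfer_imset : transfer @: A = B.
Proof.
apply/eqP; rewrite eqEcard (card_in_imset transfer_inj) cardAB leqnn andbT.
by apply/subsetP => _ /imsetP[x xA ->]; apply: transfer_mem.
Qed.

End Transfer.

Section SymmetricGroups.
Variable T : finType.
Implicit Types (A B C : {set T}) (P Q : {set {set T}}).

Lemma astab_setactP P (p : {perm T}) :
  reflect (forall A, A \in P -> p @: A = A) (p \in 'C(P | 'P^*)).
Proof. by apply: (iffP astabP) => fixP A /fixP. Qed.

Lemma astab_setactE P : 'C(P | 'P^*) = [set p : {perm T} | [forall A in P, p @: A == A]].
Proof.
apply/setP => p; rewrite [in RHS]inE.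
by apply/astab_setactP/forall_inP => fixP A /fixP => [-> | /eqP].
Qed.

Lemma SymT : Sym [set: T] = [set: {perm T}].
Proof. by apply/setP => p; rewrite !inE; apply/subsetP => x; rewrite inE. Qed.

Lemma Sym0 : Sym (set0 : {set T}) = 1.
Proof.
by apply/trivgP/subsetP => p; rewrite inE => /perm_on_id ->; rewrite ?cards0 ?group1.
Qed.

Lemma SymS A B : A \subset B -> Sym A \subset Sym B.
Proof. by move=> sAB; apply/subsetP => p; rewrite !inE => /subset_trans; apply. Qed.

Lemma SymI_disjoint A C : [disjoint A & C] -> Sym A :&: Sym C = 1.
Proof.
rewrite -setI_eq0 => /eqP AC0.
by rewrite !SymE -astabU -setCI AC0 -SymE Sym0.
Qed.

Lemma Sym_sub_astab1 A B : A \subset B -> Sym A \subset 'C[B | 'P^*].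
Proof.
move=> sAB; apply/subsetP => p; rewrite inE => pA.
rewrite astab1_set; apply/astabsP => x; rewrite /= apermE.
exact: perm_closed (subset_trans pA sAB).
Qed.

Lemma Sym_disjoint_astab1 A B : [disjoint A & B] -> Sym A \subset 'C[B | 'P^*].
Proof.
rewrite astab1_set -astabsC -astab1_set => dAB.
by apply: Sym_sub_astab1; rewrite -disjoints_subset.
Qed.

Lemma Sym_disjoint_astab A Q :
  [disjoint A & cover Q] -> Sym A \subset 'C(Q | 'P^*).
Proof.
move=> dAQ; apply/subsetP => h hA; apply/astab_setactP => B QB.
have dAB : [disjoint A & B] by apply: disjointWr dAQ; apply: bigcup_sup QB.
exact: astab1P (subsetP (Sym_disjoint_astab1 dAB) h hA).
Qed.

Lemma Sym_dprodU1 A Q : [disjoint A & cover Q] ->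
  Sym A \x (Sym (cover Q) :&: 'C(Q | 'P^*))
    = Sym (A :|: cover Q) :&: 'C(A |: Q | 'P^*).
Proof.
move=> dAQ; set C := cover Q.
have hC : Sym A \subset 'C(Q | 'P^*) := Sym_disjoint_astab dAQ.
rewrite dprodE; first last.
- by rewrite setIA SymI_disjoint // setI1g.
- apply/subsetP => k /setIP[kC _]; apply/centP => h hA.
  by apply: commute_sym; apply: perm_onC dAQ; rewrite -?inE.
rewrite astabU; apply/setP => p; apply/idP/idP.
  case/mulsgP => h k hA /setIP[kC kQ] ->.
  have hAC : h \in Sym (A :|: C) := subsetP (SymS (subsetUl A C)) h hA.
  have kAC : k \in Sym (A :|: C) := subsetP (SymS (subsetUr A C)) k kC.
  have hA1 : h \in 'C[A | 'P^*] := subsetP (Sym_sub_astab1 (subxx A)) h hA.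
  have kA1 : k \in 'C[A | 'P^*].
    by apply: (subsetP (Sym_disjoint_astab1 _)) kC; rewrite disjoint_sym.
  by rewrite in_setI groupM // in_setI !groupM // (subsetP hC).
case/setIP; rewrite inE => pAC /setIP[pA1 pQ].
have nAp : p \in 'N(A | 'P) by rewrite -astab1_set.
set h := restr_perm A p; have hA : h \in Sym A by rewrite inE restr_perm_on.
rewrite -(mulKVg h p); apply: mem_mulg => //; apply/setIP; split.
  rewrite inE; apply/subsetP => x; rewrite inE permM; apply: contraR => xC; apply/eqP.
  have hV : perm_on A h^-1 by rewrite perm_onV -?inE.
  have [xA | xA] := boolP (x \in A).
    by rewrite -(restr_permE nAp _) ?permKV ?(perm_closed _ hV).
  by rewrite (out_perm hV xA) (out_perm pAC) // inE negb_or xA.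
by rewrite groupM // groupV (subsetP hC).
Qed.

Lemma bigdprod_Sym P : trivIset P ->
  \big[dprod/1]_(A in P) Sym A = Sym (cover P) :&: 'C(P | 'P^*).
Proof.
elim: {P}_.+1 {-2}P (ltnSn #|P|) => // m IH P lePm tiP.
have [-> | [A PA]] := set_0Vmem P.
  by rewrite big_set0 /cover big_set0 Sym0 setI1g.
have coverP : cover P = A :|: cover (P :\ A).
  by rewrite -{1}(setD1K PA) /cover bigcup_setU big_set1.
have dA : [disjoint A & cover (P :\ A)].
  by rewrite coverD1 // disjoint_sym disjoints_subset subsetDr.
rewrite (bigD1 A) //= (eq_bigl [in P :\ A]) => [|B]; last by rewrite !inE andbC.
rewrite IH ?trivIsetD //; last by move: lePm; rewrite (cardsD1 A P) PA.
by rewrite Sym_dprodU1 // -coverP setD1K.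
Qed.

Section OrdinalPermutations.
Variables (A : {set T}) (x0 : T).
Hypothesis Ax0 : x0 \in A.

Definition ord_to_Sym_fun (q : {perm 'I_#|A|}) (x : T) : T :=
  if x \in A then enum_val (q (enum_rank_in Ax0 x)) else x.

Lemma ord_to_Sym_funM q1 q2 x :
  ord_to_Sym_fun (q1 * q2) x = ord_to_Sym_fun q2 (ord_to_Sym_fun q1 x).
Proof.
rewrite /ord_to_Sym_fun; case: ifP => xA; last by rewrite xA.
by rewrite enum_valP enum_valK_in permM.
Qed.

Lemma ord_to_Sym_funK q : cancel (ord_to_Sym_fun q) (ord_to_Sym_fun q^-1).
Proof.
move=> x; rewrite -ord_to_Sym_funM mulgV /ord_to_Sym_fun perm1.
by case: ifP => // xA; rewrite enum_rankK_in.
Qed.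

Definition ord_to_Sym q : {perm T} := perm (can_inj (ord_to_Sym_funK q)).

Lemma ord_to_Sym_enum_val q i : ord_to_Sym q (enum_val i) = enum_val (q i).
Proof. by rewrite permE /ord_to_Sym_fun enum_valP enum_valK_in. Qed.

Lemma ord_to_SymM : {in [set: {perm 'I_#|A|}] &, {morph ord_to_Sym : q1 q2 / q1 * q2}}.
Proof. by move=> q1 q2 _ _; apply/permP => x; rewrite permM !permE ord_to_Sym_funM. Qed.

Canonical ord_to_Sym_morphism := Morphism ord_to_SymM.

Lemma injm_ord_to_Sym : 'injm ord_to_Sym_morphism.
Proof.
apply/injmP => q1 q2 _ _ /= /permP eq_q; apply/permP => i; apply: enum_val_inj.
by rewrite -!ord_to_Sym_enum_val eq_q.
Qed.

Lemma im_ord_to_Sym : ord_to_Sym_morphism @* [set: {perm 'I_#|A|}] = Sym A.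
Proof.
apply/eqP; rewrite eqEcard card_injm ?injm_ord_to_Sym // cardsT card_Sym card_Sn.
rewrite leqnn andbT morphimEdom; apply/subsetP => _ /imsetP[q _ ->].
rewrite inE; apply/subsetP => x; rewrite inE /= permE /ord_to_Sym_fun.
by case: ifP => //; rewrite eqxx.
Qed.

End OrdinalPermutations.

Lemma Sym_isog A : Sym A \isog [set: {perm 'I_#|A|}].
Proof.
have [-> | [x0 Ax0]] := set_0Vmem A.
  apply: trivial_isog; first exact: Sym0.
  by apply/eqP; rewrite trivg_card1 cardsT card_Sn cards0.
by rewrite isog_sym; apply/isogP; exists (ord_to_Sym_morphism Ax0);
  [exact: injm_ord_to_Sym | exact: im_ord_to_Sym].
Qed.

End SymmetricGroups.

Section TwinClasses.
Variables (n : nat) (le : rel 'I_n).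
Implicit Types (x y z : 'I_n) (a b : TC le) (phi : {perm 'I_n}) (psi : {perm TC le}).
Local Notation twin := (twin le).

Lemma twin_refl : reflexive twin.
Proof. by move=> x; rewrite /twin !eqxx. Qed.

Lemma twin_sym : symmetric twin.
Proof. by move=> x y; rewrite /twin eq_sym [Uset _ x == _]eq_sym. Qed.

Lemma twin_trans : transitive twin.
Proof. by move=> y x z; rewrite /twin => /andP[/eqP-> /eqP->]. Qed.

Definition twin_class x : {set 'I_n} := [set y | twin x y].

Lemma twin_class_in x : twin_class x \in twin_classes le.
Proof. exact: imset_f. Qed.

Definition tc_of x : TC le := exist _ (twin_class x) (twin_class_in x).

Lemma mem_tc_of x : x \in val (tc_of x).
Proof. by rewrite inE twin_refl. Qed.

Lemma twin_classE x y : twin x y -> twin_class x = twin_class y.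
Proof.
move=> txy; apply/setP => z; rewrite !inE.
by apply/idP/idP; apply: twin_trans; rewrite // twin_sym.
Qed.

Lemma tc_of_mem a x : x \in val a -> tc_of x = a.
Proof.
move=> xa; apply: val_inj => /=; have /imsetP[y _ eA] := valP a.
by move: xa; rewrite eA inE => /twin_classE <-.
Qed.

Lemma tc_of_onto a : exists x, a = tc_of x.
Proof.
have /imsetP[x _ eA] := valP a; exists x; apply/esym/tc_of_mem.
by rewrite eA inE twin_refl.
Qed.

Lemma twin_nle x y : twin x y -> x != y -> le x y = false.
Proof. by case/andP=> /eqP/setP/(_ x) + _ nxy; rewrite !inE eqxx nxy => /= <-. Qed.

Lemma le_twinl x x' y : twin x x' -> x != y -> x' != y -> le x y = le x' y.
Proof.
by case/andP=> _ /eqP/setP/(_ y) + nxy nx'y; rewrite !inE ![y == _]eq_sym nxy nx'y.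
Qed.

Lemma le_twinr x y y' : twin y y' -> x != y -> x != y' -> le x y = le x y'.
Proof. by case/andP=> /eqP/setP/(_ x) + _ nxy nxy'; rewrite !inE nxy nxy'. Qed.

Lemma trivIset_twin_classes : trivIset (twin_classes le).
Proof.
apply/trivIsetP => _ _ /imsetP[x _ ->] /imsetP[y _ ->] /eqP nxy.
apply/pred0P => z /=; apply/negbTE/andP => -[]; rewrite !inE => txz tyz.
by apply: nxy; exact: etrans (twin_classE txz) (esym (twin_classE tyz)).
Qed.

Lemma cover_twin_classes : cover (twin_classes le) = [set: 'I_n].
Proof.
apply/setP => x; rewrite inE; apply/bigcupP.
by exists (twin_class x); rewrite ?twin_class_in // inE twin_refl.
Qed.

Lemma induces_tc_of phi psi x : induces le phi psi -> psi (tc_of x) = tc_of (phi x).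
Proof. by move=> hind; apply/esym/tc_of_mem; rewrite hind imset_f ?mem_tc_of. Qed.

Lemma induces_uniq phi psi1 psi2 :
  induces le phi psi1 -> induces le phi psi2 -> psi1 = psi2.
Proof. by move=> h1 h2; apply/permP => a; apply: val_inj; rewrite h1 h2. Qed.

Lemma inducesM phi1 phi2 psi1 psi2 : induces le phi1 psi1 -> induces le phi2 psi2 ->
  induces le (phi1 * phi2) (psi1 * psi2).
Proof.
move=> h1 h2 a; rewrite permM h2 h1 -imset_comp.
by apply: eq_imset => x; rewrite permM.
Qed.

Lemma induces1 phi : induces le phi 1 <-> forall A, A \in twin_classes le -> phi @: A = A.
Proof.
split=> [h A clA | h a]; last by rewrite perm1 h ?(valP a).
by have := h (exist _ A clA); rewrite perm1 => <-.
Qed.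

Lemma exists_induced phi :
  (forall a, phi @: val a \in twin_classes le) -> exists psi, induces le phi psi.
Proof.
move=> cl_phi; pose f a : TC le := exist _ (phi @: val a) (cl_phi a).
have f_inj : injective f.
  by move=> a b /(congr1 val)/(imset_inj (@perm_inj _ phi))/val_inj.
by exists (perm f_inj) => a; rewrite permE.
Qed.

Lemma exists_inducing psi :
  (forall a, #|val (psi a)| = #|val a|) -> exists phi, induces le phi psi.
Proof.
move=> card_psi; pose f x := transfer (val (tc_of x)) (val (psi (tc_of x))) x.
have f_mem x : f x \in val (psi (tc_of x)).
  by rewrite /f transfer_mem ?card_psi ?mem_tc_of.
have f_inj : injective f.
  move=> x y fxy; have exy : tc_of x = tc_of y.
    by apply: (@perm_inj _ psi); rewrite -(tc_of_mem (f_mem x)) fxy (tc_of_mem (f_mem y)).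
  have yx : y \in val (tc_of x) by rewrite exy mem_tc_of.
  by move: fxy; rewrite /f -exy; apply: transfer_inj (mem_tc_of x) yx; rewrite card_psi.
exists (perm f_inj) => a; rewrite (eq_imset _ (permE f_inj)).
rewrite -{1}(transfer_imset (esym (card_psi a))); apply: eq_in_imset => x xa.
by rewrite /f (tc_of_mem xa).
Qed.

Lemma AutP_le phi : phi \in AutP le -> forall x y, le (phi x) (phi y) = le x y.
Proof. by rewrite inE => /forallP autP x y; rewrite (eqP (forallP (autP x) y)). Qed.

Lemma AutP_twin_class phi x :
  phi \in AutP le -> phi @: twin_class x = twin_class (phi x).
Proof.
move=> /AutP_le le_phi.
have [D_phi U_phi] : (forall y, Dset le (phi y) = phi @: Dset le y)
                   /\ (forall y, Uset le (phi y) = phi @: Uset le y).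
  split=> y; rewrite -preim_permV; apply/setP => z;
    by rewrite !inE -{1 2}(permKV phi z) (inj_eq perm_inj) le_phi.
have twin_phi y : twin (phi x) (phi y) = twin x y.
  by rewrite /twin !D_phi !U_phi !(inj_eq (imset_inj (@perm_inj _ phi))).
by rewrite -preim_permV; apply/setP => z; rewrite !inE -twin_phi permKV.
Qed.

Lemma AutP_exists_induced phi : phi \in AutP le -> exists psi, induces le phi psi.
Proof.
move=> phiA; apply: exists_induced => a; have [x ->] := tc_of_onto a.
by rewrite AutP_twin_class // twin_class_in.
Qed.

Lemma AutTw1 : 1 \in AutTw le.
Proof. by rewrite inE; apply/forallP => a; apply/forallP => b; rewrite !perm1. Qed.

Hypothesis le_refl : reflexive le.

Lemma twin_le_refl : reflexive (@twin_le _ le).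
Proof.
move=> a; have [x ->] := tc_of_onto a.
apply/existsP; exists x; rewrite mem_tc_of /=.
by apply/existsP; exists x; rewrite mem_tc_of le_refl.
Qed.

Lemma le_tc_of x y :
  le x y = if tc_of x == tc_of y then x == y else twin_le (tc_of x) (tc_of y).
Proof.
case: eqVneq => [exy | nexy].
  have txy : twin x y by move: (mem_tc_of y); rewrite -exy inE.
  by case: eqVneq => [-> | nxy]; [exact: le_refl | exact: twin_nle].
have neq u v : u \in val (tc_of x) -> v \in val (tc_of y) -> u != v.
  by move=> ux vy; apply: contra_neq nexy => euv; rewrite -(tc_of_mem ux) euv (tc_of_mem vy).
apply/idP/existsP => [lxy | [x' /andP[x'x /existsP[y' /andP[y'y lx'y']]]]].
  by exists x; rewrite mem_tc_of; apply/existsP; exists y; rewrite mem_tc_of.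
have [txx' tyy'] : twin x x' /\ twin y y' by move: x'x y'y; rewrite !inE.
rewrite (le_twinl txx') ?neq ?mem_tc_of //.
by rewrite (le_twinr tyy') ?neq ?mem_tc_of.
Qed.

Lemma AutP_inducesE phi psi :
  induces le phi psi -> (phi \in AutP le) = (psi \in AutTw le).
Proof.
move=> hind.
have le_phi x y : le (phi x) (phi y) =
    if tc_of x == tc_of y then x == y else twin_le (psi (tc_of x)) (psi (tc_of y)).
  by rewrite le_tc_of -!(induces_tc_of _ hind) !(inj_eq perm_inj).
rewrite !inE; apply/forallP/forallP => [autP a | autT x].
  apply/forallP => b; have [[x ->] [y ->]] := (tc_of_onto a, tc_of_onto b).
  have := forallP (autP x) y; rewrite le_tc_of le_phi.
  by case: (tc_of x =P tc_of y) => [-> | //]; rewrite !twin_le_refl.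
apply/forallP => y; rewrite le_tc_of le_phi; case: ifP => // _.
exact: forallP (autT _) _.
Qed.

End TwinClasses.

Unset Implicit Arguments. Set Strict Implicit. Set Printing Implicit Defensive.

Theorem proposition4p6 (n : nat) (le : rel 'I_n) :
  is_NL_poset le ->
  (* pi is well defined with values in Aut(P_equiv) (and uniquely determined) *)
  (forall phi, phi \in AutP le ->
     (exists2 psi, psi \in AutTw le & induces le phi psi) /\
     (forall psi1 psi2, induces le phi psi1 -> induces le phi psi2 -> psi1 = psi2)) /\
  (* pi is a group homomorphism *)
  (forall phi1 phi2 psi1 psi2,
     phi1 \in AutP le -> phi2 \in AutP le ->
     induces le phi1 psi1 -> induces le phi2 psi2 ->
     induces le (phi1 * phi2) (psi1 * psi2)) /\
  (* ker pi = all bijections of X_n permuting each twin class *)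
  (forall phi : {perm 'I_n},
     (phi \in AutP le /\ induces le phi 1) <->
     (forall A, A \in twin_classes le -> phi @: A = A)) /\
  (* ker pi is the direct product of the symmetric groups of the twin classes *)
  [set phi : {perm 'I_n} | [forall A in twin_classes le, phi @: A == A]]
     = \big[dprod/1]_(A in twin_classes le) Sym A /\
  (forall A, A \in twin_classes le -> Sym A \isog [set: {perm 'I_#|A|}]) /\
  (* surjectivity criterion *)
  ((forall psi, psi \in AutTw le -> exists2 phi, phi \in AutP le & induces le phi psi)
   <->
   (forall psi, psi \in AutTw le -> forall a, #|val (psi a)| = #|val a|)).
Proof.
case=> le_refl _ _ _.
split.
  move=> phi phiA; split; last exact: induces_uniq.
  have [psi hind] := AutP_exists_induced phiA.
  by exists psi; rewrite -?(AutP_inducesE le_refl hind).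
split; first by move=> phi1 phi2 psi1 psi2 _ _; apply: inducesM.
split.
  move=> phi; split=> [[_ /induces1] // | /induces1 hind].
  by rewrite (AutP_inducesE le_refl hind) AutTw1.
split.
  rewrite -astab_setactE bigdprod_Sym ?trivIset_twin_classes //.
  by rewrite cover_twin_classes SymT setTI.
split; first by move=> A _; apply: Sym_isog.
split=> [surj psi psiA a | card_psi psi psiA].
  by have [phi _ ->] := surj psi psiA; rewrite card_imset //; apply: perm_inj.
have [phi hind] := exists_inducing (card_psi psi psiA).
by exists phi; rewrite ?(AutP_inducesE le_refl hind).
Qed.
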